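(* Let $\beta_1,\beta_2>0$, $\nu_1,\nu_2\in(0,1)$, $\rho_1,\rho_2\in(0,1)$, and define \[ A=\beta_1(1-\nu_1)+\beta_2(1-\nu_2),\quad a=\beta_1(1-\nu_1)-\beta_2(1-\nu_2),\quad B=\beta_1\nu_1+\beta_2\nu_2,\quad b=-\beta_1\nu_1+\beta_2\nu_2, \] \[ D=\beta_1(1-\nu_1)(1-\rho_1)+\beta_2(1-\nu_2)(1-\rho_2),\qquad d=-\beta_1(1-\nu_1)(1-\rho_1)+\beta_2(1-\nu_2)(1-\rho_2). \] Assume $1-\frac{DB-bd}{AB+ba}>0$ and set $z_0=\ln\!\Big(1-\frac{DB-bd}{AB+ba}\Big)$. Consider the system on $\mathbb{R}^3$ \[ \dot z=e^{z_0}(1-e^{z})-u+\frac{b}{B}\,w,\qquad \dot u=\Big(A+\frac{ba}{B}\Big)e^{z_0}(e^{z}-1),\qquad \dot w=a\,e^{z_0}(e^{z}-1)-B\,w . \] If $B^2>ab$, then this system is globally stable, with all solutions tending to $(0,0,0)$ as $t\to\infty$.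
   Context: The system is obtained from the two-group resource–consumption model $\dot x=(1-x)x-(y_1+y_2)x$, $\dot y_1=\beta_1((1-\nu_1)(x-\rho_1)-\nu_1(y_1-y_2))$, $\dot y_2=\beta_2((1-\nu_2)(x-\rho_2)-\nu_2(y_2-y_1))$ by shifting its equilibrium to the origin after the substitutions $\ln x$, $y_1+y_2$, $y_1-y_2$; $e^{z_0}$ is the equilibrium resource level. *)

From Stdlib Require Import Reals.
From Coquelicot Require Import Coquelicot.
Open Scope R_scope.

Definition cA (b1 b2 n1 n2 : R) : R := b1 * (1 - n1) + b2 * (1 - n2).
Definition ca (b1 b2 n1 n2 : R) : R := b1 * (1 - n1) - b2 * (1 - n2).
Definition cB (b1 b2 n1 n2 : R) : R := b1 * n1 + b2 * n2.
Definition cb (b1 b2 n1 n2 : R) : R := - b1 * n1 + b2 * n2.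
Definition cD (b1 b2 n1 n2 r1 r2 : R) : R :=
  b1 * (1 - n1) * (1 - r1) + b2 * (1 - n2) * (1 - r2).
Definition cd (b1 b2 n1 n2 r1 r2 : R) : R :=
  - b1 * (1 - n1) * (1 - r1) + b2 * (1 - n2) * (1 - r2).

Definition fz (z0 B b : R) (z u w : R) : R := exp z0 * (1 - exp z) - u + (b / B) * w.
Definition fu (z0 A a B b : R) (z u w : R) : R := (A + b * a / B) * exp z0 * (exp z - 1).
Definition fw (z0 a B : R) (z u w : R) : R := a * exp z0 * (exp z - 1) - B * w.

Definition is_solution (z0 A a B b : R) (z u w : R -> R) : Prop :=
  (forall t, 0 < t ->
     is_derive z t (fz z0 B b (z t) (u t) (w t)) /\
     is_derive u t (fu z0 A a B b (z t) (u t) (w t)) /\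
     is_derive w t (fw z0 a B (z t) (u t) (w t))) /\
  filterlim z (at_right 0) (locally (z 0)) /\
  filterlim u (at_right 0) (locally (u 0)) /\
  filterlim w (at_right 0) (locally (w 0)).

Definition norm3 (x y v : R) : R := sqrt (x ^ 2 + y ^ 2 + v ^ 2).

From Stdlib Require Import Reals Lra Psatz.
From Coquelicot Require Import Coquelicot.
Open Scope R_scope.

(* Write c = e^{z0}, K = A + b a / B > 0 and g = c (e^z - 1); the system becomes
   z' = - g - u + (b/B) w, u' = K g, w' = a g - B w.  Along solutions,
   V = 2 K c (e^z - 1 - z) + u^2 + gm w^2 has V' = -2 (K g^2 - (K b/B + gm a) g w + gm B w^2),
   a negative definite form in (g, w) as soon as (K b/B + gm a)^2 < 4 K gm B; a weight gm > 0
   with this property exists precisely because B^2 > a b.  V is positive definite and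
   nonincreasing, which gives stability and confines z to a compact range on each solution.
   There z and g are comparable, so adding a small cross term dl u z turns V into a function
   that decays exponentially, and every solution converges to the origin. *)

(** * Inequalities for [exp z - 1 - z] *)

Definition exp_gap (z : R) : R := exp z - 1 - z.

Lemma exp_gap_ge0 (z : R) : 0 <= exp_gap z.
Proof. unfold exp_gap; pose proof (exp_ineq1_le z); lra. Qed.

Lemma exp_mul_exp_opp (z : R) : exp z * exp (- z) = 1.
Proof. now rewrite <- exp_plus, Rplus_opp_r, exp_0. Qed.

Lemma sqr_le_4_exp_gap (z : R) : -2 <= z -> z ^ 2 <= 4 * exp_gap z.
Proof.
  intros Hz; unfold exp_gap.
  assert (Hsq : exp z = exp (z / 2) ^ 2) by (simpl; rewrite Rmult_1_r, <- exp_plus; f_equal; field).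
  pose proof (exp_ineq1_le (z / 2)); rewrite Hsq; nra.
Qed.

Lemma exp_gap_le_2_sqr (z : R) : z <= 1 / 2 -> exp_gap z <= 2 * z ^ 2.
Proof.
  intros Hz; unfold exp_gap.
  (* [exp z * (1 - z) <= 1] gives [exp_gap z * (1 - z) <= z ^ 2]. *)
  pose proof (exp_ineq1_le (- z)); pose proof (exp_mul_exp_opp z); pose proof (exp_pos z).
  nra.
Qed.

Lemma mul_expm1_ge0 (z : R) : 0 <= z * (exp z - 1).
Proof.
  destruct (Rle_dec 0 z).
  - pose proof (exp_ineq1_le z); nra.
  - assert (exp z < 1) by (rewrite <- exp_0; apply exp_increasing; lra); nra.
Qed.

Lemma exp_gap_le_mul_expm1 (z : R) : exp_gap z <= z * (exp z - 1).
Proof.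
  unfold exp_gap.
  pose proof (exp_ineq1_le (- z)); pose proof (exp_mul_exp_opp z); pose proof (exp_pos z).
  nra.
Qed.

Lemma abs_le_exp_mul_abs_expm1 (z r : R) :
  Rabs z <= r -> Rabs z <= exp r * Rabs (exp z - 1).
Proof.
  intros Hz.
  assert (HR : 1 <= exp r) by (pose proof (exp_ineq1_le r); pose proof (Rabs_pos z); lra).
  destruct (Rle_dec 0 z).
  - pose proof (exp_ineq1_le z).
    rewrite !Rabs_right by lra. nra.
  - (* For [z < 0]: [1 - exp z >= - z * exp z >= - z * exp (- r)]. *)
    rewrite Rabs_left in Hz by lra.
    assert (exp z < 1) by (rewrite <- exp_0; apply exp_increasing; lra).
    rewrite Rabs_left, Rabs_left1 by lra.
    assert (1 <= exp z * exp r) by (rewrite <- exp_plus; pose proof (exp_ineq1_le (z + r)); lra).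
    pose proof (exp_ineq1_le (- z)); pose proof (exp_mul_exp_opp z); pose proof (exp_pos z).
    nra.
Qed.

Lemma abs_le_of_exp_gap_le (z H : R) : exp_gap z <= H -> Rabs z <= 2 + H.
Proof.
  intros Hz; pose proof (exp_gap_ge0 z).
  destruct (Rle_dec (-2) z) as [Hz2 | Hz2].
  - pose proof (sqr_le_4_exp_gap z Hz2).
    apply Rabs_le; split; [lra | nra].
  - unfold exp_gap in *; pose proof (exp_pos z).
    rewrite Rabs_left by lra; lra.
Qed.

Lemma sqr_le_exp_gap_of_abs_le (z r : R) : Rabs z <= r -> z ^ 2 <= (4 + r ^ 2) * exp_gap z.
Proof.
  intros Hz; pose proof (exp_gap_ge0 z).
  destruct (Rle_dec (-2) z) as [Hz2 | Hz2].
  - pose proof (sqr_le_4_exp_gap z Hz2); nra.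
  - (* far to the left, [exp_gap z >= - 1 - z >= 1] *)
    assert (1 <= exp_gap z) by (unfold exp_gap; pose proof (exp_pos z); lra).
    assert (Rabs z ^ 2 <= r ^ 2) by (apply pow_incr; split; [apply Rabs_pos | assumption]).
    rewrite <- (pow2_abs z); nra.
Qed.

Lemma mul_expm1_le_of_abs_le (z r : R) :
  Rabs z <= r -> z * (exp z - 1) <= exp r * (exp z - 1) ^ 2.
Proof.
  intros Hz; pose proof (abs_le_exp_mul_abs_expm1 z r Hz).
  rewrite <- (Rabs_pos_eq _ (mul_expm1_ge0 z)), Rabs_mult, <- (pow2_abs (exp z - 1)).
  pose proof (Rabs_pos (exp z - 1)); nra.
Qed.

Lemma sqr_le_of_abs_le (z r : R) : Rabs z <= r -> z ^ 2 <= exp r ^ 2 * (exp z - 1) ^ 2.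
Proof.
  intros Hz; pose proof (abs_le_exp_mul_abs_expm1 z r Hz).
  rewrite <- (pow2_abs z), <- (pow2_abs (exp z - 1)), <- Rpow_mult_distr.
  apply pow_incr; split; [apply Rabs_pos | assumption].
Qed.

(** * Choice of the weight *)

Lemma quad_form_coercive (P Q S : R) :
  0 < P -> 0 < S -> Q ^ 2 < 4 * P * S ->
  exists eps, 0 < eps /\
    forall x y, eps * (x ^ 2 + y ^ 2) <= P * x ^ 2 - Q * x * y + S * y ^ 2.
Proof.
  intros HP HS HQ.
  (* With this [eps], the form shifted by [- eps] has discriminant [- 4 eps^2]. *)
  set (eps := (4 * P * S - Q ^ 2) / (4 * (P + S))).
  assert (Heps : 0 < eps) by (apply Rdiv_lt_0_compat; lra).
  assert (Hdef : eps * (4 * (P + S)) = 4 * P * S - Q ^ 2) by (unfold eps; field; lra).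
  assert (HPe : 0 < P - eps) by nra.
  exists eps; split; [exact Heps |]; intros x y.
  assert (Hdisc : 4 * (P - eps) * (S - eps) - Q ^ 2 = 4 * eps ^ 2) by nra.
  assert (Hsq : 4 * (P - eps) * ((P - eps) * x ^ 2 - Q * x * y + (S - eps) * y ^ 2)
                = (2 * (P - eps) * x - Q * y) ^ 2 + (4 * (P - eps) * (S - eps) - Q ^ 2) * y ^ 2)
    by ring.
  assert (0 <= (P - eps) * x ^ 2 - Q * x * y + (S - eps) * y ^ 2).
  { apply (Rmult_le_reg_l (4 * (P - eps))); [lra |].
    rewrite Rmult_0_r, Hsq, Hdisc.
    pose proof (pow2_ge_0 (2 * (P - eps) * x - Q * y)); pose proof (pow2_ge_0 eps);
      pose proof (pow2_ge_0 y); nra. }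
  lra.
Qed.

Lemma exists_lt_sqr_mul (a b B : R) :
  0 < B -> a * b < B ^ 2 -> exists x, 0 < x /\ (b + x * a) ^ 2 < 4 * x * B ^ 2.
Proof.
  intros HB Hab.
  assert (0 < B ^ 2) by (apply pow_lt; exact HB).
  destruct (Req_dec a 0) as [-> | Ha].
  - exists ((b ^ 2 + B ^ 2) / (4 * B ^ 2)); split.
    + apply Rdiv_lt_0_compat; nra.
    + replace (4 * ((b ^ 2 + B ^ 2) / (4 * B ^ 2)) * B ^ 2) with (b ^ 2 + B ^ 2)
        by (field; lra).
      nra.
  - (* the minimiser of [(b + x a)^2 - 4 x B^2] *)
    assert (0 < a ^ 2) by (rewrite <- Rsqr_pow2; apply Rsqr_pos_lt; exact Ha).
    exists ((2 * B ^ 2 - a * b) / a ^ 2); split.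
    + apply Rdiv_lt_0_compat; nra.
    + replace (b + (2 * B ^ 2 - a * b) / a ^ 2 * a) with (2 * B ^ 2 / a) by (field; lra).
      replace (4 * ((2 * B ^ 2 - a * b) / a ^ 2) * B ^ 2)
        with ((2 * B ^ 2 / a) ^ 2 + 4 * B ^ 2 * (B ^ 2 - a * b) / a ^ 2) by (field; lra).
      assert (0 < 4 * B ^ 2 * (B ^ 2 - a * b) / a ^ 2)
        by (apply Rdiv_lt_0_compat; nra).
      lra.
Qed.

Lemma exists_lyapunov_weight (K a B b : R) :
  0 < K -> 0 < B -> a * b < B ^ 2 ->
  exists gm, 0 < gm /\ (K * (b / B) + gm * a) ^ 2 < 4 * K * (gm * B).
Proof.
  intros HK HB Hab.
  destruct (exists_lt_sqr_mul a b B HB Hab) as [x [Hx Hlt]].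
  exists (K * x / B); split; [apply Rdiv_lt_0_compat; nra |].
  replace (K * (b / B) + K * x / B * a) with (K / B * (b + x * a)) by (field; lra).
  replace (4 * K * (K * x / B * B)) with ((K / B) ^ 2 * (4 * x * B ^ 2)) by (field; lra).
  rewrite Rpow_mult_distr.
  apply Rmult_lt_compat_l; [| exact Hlt].
  apply pow_lt, Rdiv_lt_0_compat; lra.
Qed.

(** * Pointwise estimates for the Lyapunov function *)

Definition lyapunov (K c gm dl z u w : R) : R :=
  2 * K * c * exp_gap z + u ^ 2 + gm * w ^ 2 + dl * (u * z).

Lemma lyapunov_ge_gap (K c gm z u w : R) :
  0 <= gm -> 2 * K * c * exp_gap z <= lyapunov K c gm 0 z u w.
Proof.
  intros Hgm; unfold lyapunov.
  pose proof (pow2_ge_0 u); pose proof (pow2_ge_0 w); nra.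
Qed.

Lemma lyapunov_le_near_origin (K c gm z u w : R) :
  0 < K -> 0 < c -> 0 < gm -> z <= 1 / 2 ->
  lyapunov K c gm 0 z u w <= (4 * K * c + 1 + gm) * (z ^ 2 + u ^ 2 + w ^ 2).
Proof.
  intros HK Hc Hgm Hz; unfold lyapunov.
  pose proof (exp_gap_le_2_sqr z Hz).
  assert (0 < K * c) by nra.
  pose proof (pow2_ge_0 z); pose proof (pow2_ge_0 u); pose proof (pow2_ge_0 w).
  nra.
Qed.

Lemma exists_ball_lyapunov_lt (K c gm eta : R) :
  0 < K -> 0 < c -> 0 < gm -> 0 < eta ->
  exists delta, 0 < delta /\
    forall z u w, z ^ 2 + u ^ 2 + w ^ 2 < delta ^ 2 -> lyapunov K c gm 0 z u w < eta.
Proof.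
  intros HK Hc Hgm Heta.
  set (Q := 4 * K * c + 1 + gm).
  assert (HQ : 0 < Q) by (unfold Q; nra).
  set (delta := Rmin (1 / 2) (eta / Q)).
  assert (Hdelta : 0 < delta) by (apply Rmin_glb_lt; [lra | apply Rdiv_lt_0_compat; lra]).
  exists delta; split; [exact Hdelta |]; intros z u w Hn.
  assert (delta <= 1 / 2) by apply Rmin_l.
  assert (Q * delta <= eta).
  { replace eta with (Q * (eta / Q)) by (field; lra).
    apply Rmult_le_compat_l; [lra | apply Rmin_r]. }
  assert (delta ^ 2 <= delta / 2) by nra.
  assert (Hz : z <= 1 / 2) by (pose proof (pow2_ge_0 u); pose proof (pow2_ge_0 w); nra).
  apply (Rle_lt_trans _ _ _ (lyapunov_le_near_origin K c gm z u w HK Hc Hgm Hz)).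
  apply (Rlt_le_trans _ (Q * (delta / 2))); [apply Rmult_lt_compat_l |]; lra.
Qed.

Lemma sqr_norm_le_lyapunov (K c gm r z u w : R) :
  0 < K -> 0 < c -> 0 < gm -> Rabs z <= r ->
  z ^ 2 + u ^ 2 + w ^ 2 <= ((4 + r ^ 2) / (2 * K * c) + 1 + 1 / gm) * lyapunov K c gm 0 z u w.
Proof.
  intros HK Hc Hgm Hz; unfold lyapunov; rewrite Rmult_0_l, Rplus_0_r.
  pose proof (sqr_le_exp_gap_of_abs_le z r Hz); pose proof (exp_gap_ge0 z).
  assert (0 < K * c) by nra.
  pose proof (pow2_ge_0 u); pose proof (pow2_ge_0 w).
  set (V := 2 * K * c * exp_gap z + u ^ 2 + gm * w ^ 2).
  assert (0 <= 2 * K * c * exp_gap z) by nra.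
  assert (0 <= gm * w ^ 2) by nra.
  assert (Hz2 : z ^ 2 <= (4 + r ^ 2) / (2 * K * c) * V).
  { apply Rle_trans with ((4 + r ^ 2) / (2 * K * c) * (2 * K * c * exp_gap z)).
    - replace ((4 + r ^ 2) / (2 * K * c) * (2 * K * c * exp_gap z))
        with ((4 + r ^ 2) * exp_gap z) by (field; lra); lra.
    - apply Rmult_le_compat_l; [apply Rdiv_le_0_compat; nra | unfold V; lra]. }
  assert (Hw2 : w ^ 2 <= 1 / gm * V).
  { replace (w ^ 2) with (1 / gm * (gm * w ^ 2)) by (field; lra).
    apply Rmult_le_compat_l; [apply Rlt_le, Rdiv_lt_0_compat | unfold V]; lra. }
  assert (u ^ 2 <= V) by (unfold V; lra).
  lra.
Qed.

Lemma lyapunov_le_2_strict (K c gm dl r z u w : R) :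
  0 < K -> 0 < c -> 0 < gm -> 0 <= dl <= 1 / 2 -> dl * (4 + r ^ 2) <= K * c -> Rabs z <= r ->
  lyapunov K c gm 0 z u w <= 2 * lyapunov K c gm dl z u w.
Proof.
  intros HK Hc Hgm Hdl HdlR Hz; unfold lyapunov.
  pose proof (sqr_le_exp_gap_of_abs_le z r Hz); pose proof (exp_gap_ge0 z).
  (* [2 dl |u z| <= dl u^2 + dl z^2 <= u^2 / 2 + K c exp_gap z] *)
  assert (dl * z ^ 2 <= K * c * exp_gap z) by nra.
  pose proof (pow2_ge_0 (u + z)); pose proof (pow2_ge_0 u); pose proof (pow2_ge_0 w).
  nra.
Qed.

Lemma mul_scaled_expm1_le_of_abs_le (z r c : R) :
  0 < c -> Rabs z <= r -> z * (c * (exp z - 1)) <= exp r / c * (c * (exp z - 1)) ^ 2.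
Proof.
  intros Hc Hz; pose proof (mul_expm1_le_of_abs_le z r Hz).
  replace (exp r / c * (c * (exp z - 1)) ^ 2) with (c * (exp r * (exp z - 1) ^ 2)) by (field; lra).
  replace (z * (c * (exp z - 1))) with (c * (z * (exp z - 1))) by ring.
  apply Rmult_le_compat_l; lra.
Qed.

Lemma strict_lyapunov_le_sqr (K c gm dl r z u w : R) :
  0 < K -> 0 < c -> 0 < gm -> 0 <= dl <= 1 / 2 -> Rabs z <= r ->
  let M := exp r / c in
  lyapunov K c gm dl z u w
    <= (2 * K * M + M ^ 2 + 2 + gm) * ((c * (exp z - 1)) ^ 2 + u ^ 2 + w ^ 2).
Proof.
  intros HK Hc Hgm Hdl Hz M; unfold lyapunov.
  assert (HM : 0 < M) by (apply Rdiv_lt_0_compat; [apply exp_pos | exact Hc]).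
  pose proof (mul_scaled_expm1_le_of_abs_le z r c Hc Hz) as Hzg; fold M in Hzg.
  assert (c * exp_gap z <= z * (c * (exp z - 1))) by (pose proof (exp_gap_le_mul_expm1 z); nra).
  set (g2 := (c * (exp z - 1)) ^ 2) in *.
  assert (Hgap : 2 * K * c * exp_gap z <= 2 * K * M * g2).
  { replace (2 * K * c * exp_gap z) with (2 * K * (c * exp_gap z)) by ring.
    replace (2 * K * M * g2) with (2 * K * (M * g2)) by ring.
    apply Rmult_le_compat_l; lra. }
  assert (Hzz : z ^ 2 <= M ^ 2 * g2).
  { replace (M ^ 2 * g2) with (exp r ^ 2 * (exp z - 1) ^ 2) by (unfold M, g2; field; lra).
    exact (sqr_le_of_abs_le z r Hz). }
  assert (dl * (u * z) <= (u ^ 2 + M ^ 2 * g2) / 4).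
  { pose proof (pow2_ge_0 (u - z)); pose proof (pow2_ge_0 z); pose proof (pow2_ge_0 u).
    destruct (Rle_dec 0 (u * z)).
    - assert (dl * (u * z) <= 1 / 2 * (u * z)) by (apply Rmult_le_compat_r; lra); nra.
    - assert (dl * (u * z) <= 0) by nra; nra. }
  assert (0 <= K * M) by nra.
  pose proof (pow2_ge_0 M); pose proof (pow2_ge_0 u); pose proof (pow2_ge_0 w).
  assert (0 <= g2) by apply pow2_ge_0.
  nra.
Qed.

Lemma perturbed_dissipation_le (K M q eps dl Qf g z u w : R) :
  0 < K -> 0 <= dl -> dl * (K * M + 1) <= eps -> dl * (1 + q ^ 2) <= eps ->
  eps * (g ^ 2 + w ^ 2) <= Qf -> z * g <= M * g ^ 2 ->
  -2 * Qf + dl * (K * g * z - u * g - u ^ 2 + q * u * w) <= - (dl / 2) * (g ^ 2 + u ^ 2 + w ^ 2).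
Proof.
  intros HK Hdl HdlM Hdlq HQ Hzg.
  (* Young: [- u g <= u^2/4 + g^2] and [q u w <= u^2/4 + q^2 w^2]. *)
  assert (Hug : dl * (- (u * g)) <= dl * (u ^ 2 / 4 + g ^ 2))
    by (apply Rmult_le_compat_l; [| pose proof (pow2_ge_0 (u / 2 + g))]; nra).
  assert (Huw : dl * (q * u * w) <= dl * (u ^ 2 / 4 + q ^ 2 * w ^ 2))
    by (apply Rmult_le_compat_l; [| pose proof (pow2_ge_0 (u / 2 - q * w))]; nra).
  assert (Hgz : dl * (K * g * z) <= dl * (K * M * g ^ 2))
    by (apply Rmult_le_compat_l; nra).
  assert (dl * (K * M + 1) * g ^ 2 <= eps * g ^ 2)
    by (apply Rmult_le_compat_r; [apply pow2_ge_0 | lra]).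
  assert (dl * (1 + q ^ 2) * w ^ 2 <= eps * w ^ 2)
    by (apply Rmult_le_compat_r; [apply pow2_ge_0 | lra]).
  assert (0 <= dl * w ^ 2) by (apply Rmult_le_pos; [lra | apply pow2_ge_0]).
  assert (0 <= dl * g ^ 2) by (apply Rmult_le_pos; [lra | apply pow2_ge_0]).
  assert (dl * g ^ 2 <= eps * g ^ 2)
    by (apply Rmult_le_compat_r; [apply pow2_ge_0 | pose proof (pow2_ge_0 q); nra]).
  nra.
Qed.

(** * Calculus along trajectories *)

Section FilterlimArith.
Context {T : Type} {F : (T -> Prop) -> Prop} {FF : Filter F}.

Lemma filterlim_Rplus_comp (f g : T -> R) (a b : R) :
  filterlim f F (locally a) -> filterlim g F (locally b) ->
  filterlim (fun x => f x + g x) F (locally (a + b)).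
Proof.
  intros Hf Hg; exact (filterlim_comp_2 f g Rplus Hf Hg (@filterlim_plus _ R_NormedModule a b)).
Qed.

Lemma filterlim_Rminus_comp (f g : T -> R) (a b : R) :
  filterlim f F (locally a) -> filterlim g F (locally b) ->
  filterlim (fun x => f x - g x) F (locally (a - b)).
Proof.
  intros Hf Hg; apply (filterlim_Rplus_comp f (fun x => - g x) a (- b) Hf).
  exact (filterlim_comp _ _ _ _ _ _ _ _ Hg (@filterlim_opp _ R_NormedModule b)).
Qed.

Lemma filterlim_Rmult_comp (f g : T -> R) (a b : R) :
  filterlim f F (locally a) -> filterlim g F (locally b) ->
  filterlim (fun x => f x * g x) F (locally (a * b)).
Proof. intros Hf Hg; exact (filterlim_comp_2 f g Rmult Hf Hg (filterlim_mult a b)). Qed.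

Lemma filterlim_exp_comp (f : T -> R) (a : R) :
  filterlim f F (locally a) -> filterlim (fun x => exp (f x)) F (locally (exp a)).
Proof.
  intros Hf; apply (filterlim_comp _ _ _ _ _ _ _ _ Hf).
  apply continuity_pt_filterlim, derivable_continuous_pt, derivable_pt_exp.
Qed.

End FilterlimArith.

Lemma filterlim_lyapunov_comp (K c gm dl : R) (F : (R -> Prop) -> Prop) {FF : Filter F}
    (z u w : R -> R) (z0 u0 w0 : R) :
  filterlim z F (locally z0) -> filterlim u F (locally u0) -> filterlim w F (locally w0) ->
  filterlim (fun s => lyapunov K c gm dl (z s) (u s) (w s)) F
    (locally (lyapunov K c gm dl z0 u0 w0)).
Proof.
  intros Hz Hu Hw; unfold lyapunov, exp_gap; cbn [pow].
  repeat lazymatch goal with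
  | |- filterlim (fun s => _ + _) _ _ => apply filterlim_Rplus_comp
  | |- filterlim (fun s => _ - _) _ _ => apply filterlim_Rminus_comp
  | |- filterlim (fun s => _ * _) _ _ => apply filterlim_Rmult_comp
  | |- filterlim (fun s => exp _) _ _ => apply filterlim_exp_comp
  | |- _ => first [assumption | apply filterlim_const]
  end.
Qed.

Lemma is_derive_lyapunov_comp (K c gm dl : R) (z u w : R -> R) (t dz du dw d : R) :
  is_derive z t dz -> is_derive u t du -> is_derive w t dw ->
  d = 2 * K * c * (exp (z t) - 1) * dz + 2 * u t * du + 2 * gm * w t * dw
      + dl * (du * z t + u t * dz) ->
  is_derive (fun s => lyapunov K c gm dl (z s) (u s) (w s)) t d.
Proof.
  intros Hz Hu Hw ->; unfold lyapunov, exp_gap.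
  auto_derive; [repeat split; eexists; eassumption |].
  replace (Derive (fun s => z s) t) with dz by (symmetry; now apply is_derive_unique).
  replace (Derive (fun s => u s) t) with du by (symmetry; now apply is_derive_unique).
  replace (Derive (fun s => w s) t) with dw by (symmetry; now apply is_derive_unique).
  ring.
Qed.

Lemma le_at_0_of_derive_nonpos (f df : R -> R) :
  (forall t, 0 < t -> is_derive f t (df t)) -> (forall t, 0 < t -> df t <= 0) ->
  filterlim f (at_right 0) (locally (f 0)) -> forall t, 0 <= t -> f t <= f 0.
Proof.
  intros Hd Hneg Hf t [Ht | <-]; [| lra].
  assert (Hmono : forall s, 0 < s <= t -> f t <= f s).
  { intros s Hs.
    destruct (MVT_gen f s t df) as [x [Hx Heq]]; rewrite Rmin_left, Rmax_right in * by lra.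
    - intros x Hx; apply Hd; lra.
    - intros x Hx; apply continuity_pt_filterlim, (@ex_derive_continuous R_AbsRing R_NormedModule).
      exists (df x); apply Hd; lra.
    - assert (df x <= 0) by (apply Hneg; lra); nra. }
  apply (closed_filterlim_loc f (fun y => f t <= y) (f 0) Hf); [| apply closed_ge].
  exists (mkposreal t Ht); intros s Hs Hpos; apply Hmono; split; [exact Hpos |].
  apply Rlt_le, (Rle_lt_trans _ (Rabs (s - 0))); [rewrite Rminus_0_r; apply Rle_abs | exact Hs].
Qed.

Lemma filterlim_at_right_id (x : R) : filterlim (fun s => s) (at_right x) (locally x).
Proof.
  intros P HP; unfold filtermap, at_right, within.
  apply (filter_imp P); [intros s Hs _; exact Hs | exact HP].
Qed.

Lemma exp_decay_of_derive_le (f df : R -> R) (lm : R) :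
  (forall t, 0 < t -> is_derive f t (df t)) -> (forall t, 0 < t -> df t <= - lm * f t) ->
  filterlim f (at_right 0) (locally (f 0)) -> forall t, 0 <= t -> f t * exp (lm * t) <= f 0.
Proof.
  intros Hd Hle Hf t Ht.
  enough (H : f t * exp (lm * t) <= f 0 * exp (lm * 0))
    by (rewrite Rmult_0_r, exp_0, Rmult_1_r in H; exact H).
  apply (le_at_0_of_derive_nonpos (fun s => f s * exp (lm * s))
           (fun s => (df s + lm * f s) * exp (lm * s))); [| | | exact Ht].
  - intros s Hs; specialize (Hd s Hs).
    auto_derive; [eexists; exact Hd |].
    replace (Derive (fun s => f s) s) with (df s) by (symmetry; now apply is_derive_unique).
    ring.
  - intros s Hs; specialize (Hle s Hs); pose proof (exp_pos (lm * s)); nra.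
  - apply (filterlim_Rmult_comp _ _ _ _ Hf), filterlim_exp_comp.
    exact (filterlim_Rmult_comp _ _ _ _ (filterlim_const lm) (filterlim_at_right_id 0)).
Qed.

Lemma is_lim_0_of_sqr_exp_bound (x : R -> R) (P lm : R) :
  0 < lm -> (forall t, 0 <= t -> x t ^ 2 * exp (lm * t) <= P) -> is_lim x p_infty 0.
Proof.
  intros Hlm Hx; apply is_lim_spec; intros [eps Heps]; simpl.
  assert (HP : 0 <= P).
  { specialize (Hx 0 (Rle_refl 0)); pose proof (pow2_ge_0 (x 0)); pose proof (exp_pos (lm * 0)).
    nra. }
  exists (P / (lm * eps ^ 2)); intros t Ht.
  assert (Heps2 : 0 < lm * eps ^ 2) by (apply Rmult_lt_0_compat; [| apply pow_lt]; lra).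
  assert (Ht' : P < lm * t * eps ^ 2)
    by (apply (Rmult_lt_compat_r (lm * eps ^ 2)) in Ht; [| exact Heps2];
        replace (P / (lm * eps ^ 2) * (lm * eps ^ 2)) with P in Ht by (field; lra); lra).
  assert (Ht0 : 0 < t) by nra.
  assert (0 < lm * t) by nra.
  (* [exp (lm t) >= 1 + lm t] turns the bound into [x t ^ 2 < eps ^ 2]. *)
  pose proof (Hx t (Rlt_le _ _ Ht0)); pose proof (exp_ineq1_le (lm * t)).
  assert (x t ^ 2 * (1 + lm * t) <= x t ^ 2 * exp (lm * t))
    by (apply Rmult_le_compat_l; [apply pow2_ge_0 | lra]).
  assert (Hsq : x t ^ 2 < eps ^ 2) by nra.
  rewrite Rminus_0_r, <- (Rabs_pos_eq eps) by lra.
  apply Rsqr_lt_abs_0; rewrite !Rsqr_pow2; exact Hsq.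
Qed.

(** * The shifted system *)

Lemma norm3_lt_iff (x y v d : R) : 0 < d -> norm3 x y v < d <-> x ^ 2 + y ^ 2 + v ^ 2 < d ^ 2.
Proof.
  intros Hd; unfold norm3; rewrite <- (sqrt_pow2 d) at 1 by lra; split.
  - apply sqrt_lt_0_alt.
  - intros H; apply sqrt_lt_1_alt; split; [| exact H].
    pose proof (pow2_ge_0 x); pose proof (pow2_ge_0 y); pose proof (pow2_ge_0 v); lra.
Qed.

Lemma exists_small_pos (p1 e1 p2 e2 p3 e3 : R) :
  0 < p1 -> 0 < e1 -> 0 < p2 -> 0 < e2 -> 0 < p3 -> 0 < e3 ->
  exists d, 0 < d <= 1 / 2 /\ d * p1 <= e1 /\ d * p2 <= e2 /\ d * p3 <= e3.
Proof.
  intros; exists (Rmin (Rmin (1 / 2) (e1 / p1)) (Rmin (e2 / p2) (e3 / p3))).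
  assert (Hle : forall d e p, 0 < p -> d <= e / p -> d * p <= e).
  { intros d e p Hp Hd; apply (Rmult_le_compat_r p) in Hd; [| lra].
    replace (e / p * p) with e in Hd by (field; lra); exact Hd. }
  repeat split.
  - repeat apply Rmin_glb_lt; try apply Rdiv_lt_0_compat; lra.
  - apply (Rle_trans _ _ _ (Rmin_l _ _)), Rmin_l.
  - apply Hle; [lra |]; apply (Rle_trans _ _ _ (Rmin_l _ _)), Rmin_r.
  - apply Hle; [lra |]; apply (Rle_trans _ _ _ (Rmin_r _ _)), Rmin_l.
  - apply Hle; [lra |]; apply (Rle_trans _ _ _ (Rmin_r _ _)), Rmin_r.
Qed.

Section ShiftedSystem.

Variables z0 A a B b : R.
Hypothesis HB : 0 < B.
Hypothesis HK : 0 < A + b * a / B.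
Hypothesis Hab : a * b < B ^ 2.

Let K := A + b * a / B.
Let c := exp z0.
Let q := b / B.
Let g (z : R) := c * (exp z - 1).

Lemma K_pos : 0 < K.
Proof. exact HK. Qed.

Lemma c_pos : 0 < c.
Proof. apply exp_pos. Qed.

Lemma lyapunov_derive_solution (gm dl : R) (z u w : R -> R) (t : R) :
  is_solution z0 A a B b z u w -> 0 < t ->
  is_derive (fun s => lyapunov K c gm dl (z s) (u s) (w s)) t
    (-2 * (K * g (z t) ^ 2 - (K * q + gm * a) * g (z t) * w t + gm * B * w t ^ 2)
     + dl * (K * g (z t) * z t - u t * g (z t) - u t ^ 2 + q * u t * w t)).
Proof.
  intros [Hsol _] Ht; destruct (Hsol t Ht) as [Hz [Hu Hw]].
  apply (is_derive_lyapunov_comp K c gm dl z u w t _ _ _ _ Hz Hu Hw).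
  unfold g, q, K, c, fz, fu, fw; field; lra.
Qed.

Let strict_weight (gm eps : R) : Prop :=
  0 < gm /\ 0 < eps /\
  forall y v, eps * (y ^ 2 + v ^ 2) <= K * y ^ 2 - (K * q + gm * a) * y * v + gm * B * v ^ 2.

Lemma exists_strict_weight : exists gm eps, strict_weight gm eps.
Proof.
  destruct (exists_lyapunov_weight K a B b K_pos HB Hab) as [gm [Hgm Hlt]].
  destruct (quad_form_coercive K (K * q + gm * a) (gm * B)) as [eps [Heps Hform]];
    [exact K_pos | pose proof K_pos; nra | unfold q; lra |].
  exists gm, eps; repeat split; auto.
Qed.

Lemma solution_lim_lyapunov (gm dl : R) (z u w : R -> R) :
  is_solution z0 A a B b z u w ->
  filterlim (fun s => lyapunov K c gm dl (z s) (u s) (w s)) (at_right 0)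
    (locally (lyapunov K c gm dl (z 0) (u 0) (w 0))).
Proof. intros [_ [Hz [Hu Hw]]]; exact (filterlim_lyapunov_comp _ _ _ _ _ _ _ _ _ _ _ Hz Hu Hw). Qed.

Lemma lyapunov_nonincreasing (gm eps : R) (z u w : R -> R) :
  strict_weight gm eps -> is_solution z0 A a B b z u w ->
  forall t, 0 <= t -> lyapunov K c gm 0 (z t) (u t) (w t) <= lyapunov K c gm 0 (z 0) (u 0) (w 0).
Proof.
  intros [Hgm [Heps Hform]] Hs.
  apply (le_at_0_of_derive_nonpos _ _ (fun t Ht => lyapunov_derive_solution gm 0 z u w t Hs Ht));
    [| exact (solution_lim_lyapunov gm 0 z u w Hs)].
  intros t _; specialize (Hform (g (z t)) (w t)).
  pose proof (pow2_ge_0 (g (z t))); pose proof (pow2_ge_0 (w t)); nra.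
Qed.

Lemma shifted_system_stable (eps : R) :
  0 < eps -> exists delta, 0 < delta /\
    forall z u w : R -> R, is_solution z0 A a B b z u w ->
      norm3 (z 0) (u 0) (w 0) < delta ->
      forall t, 0 <= t -> norm3 (z t) (u t) (w t) < eps.
Proof.
  intros Heps.
  destruct exists_strict_weight as [gm [e Hweight]]; pose proof (proj1 Hweight) as Hgm.
  assert (HKc : 0 < K * c) by (apply Rmult_lt_0_compat; [exact K_pos | exact c_pos]).
  set (P := (4 + 3 ^ 2) / (2 * K * c) + 1 + 1 / gm).
  assert (HP : 0 < P).
  { assert (0 < 1 / gm) by (apply Rdiv_lt_0_compat; lra).
    assert (0 < (4 + 3 ^ 2) / (2 * K * c)) by (apply Rdiv_lt_0_compat; lra).
    unfold P; lra. }
  (* Below the level [2 K c] of the Lyapunov function, [exp_gap z < 1] keeps [|z| <= 3]. *)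
  set (eta := Rmin (2 * K * c) (eps ^ 2 / P)).
  assert (Heta : 0 < eta)
    by (apply Rmin_glb_lt; [lra | apply Rdiv_lt_0_compat; [apply pow_lt |]; lra]).
  assert (HetaP : P * eta <= eps ^ 2).
  { replace (eps ^ 2) with (P * (eps ^ 2 / P)) by (field; lra).
    apply Rmult_le_compat_l; [lra | apply Rmin_r]. }
  destruct (exists_ball_lyapunov_lt K c gm eta K_pos c_pos Hgm Heta) as [delta [Hdelta Hball]].
  exists delta; split; [exact Hdelta |].
  intros z u w Hs Hn t Ht.
  apply norm3_lt_iff in Hn; [| exact Hdelta].
  pose proof (Hball _ _ _ Hn) as HV0.
  pose proof (lyapunov_nonincreasing gm e z u w Hweight Hs t Ht) as HVt.
  assert (Hz : Rabs (z t) <= 3).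
  { apply (Rle_trans _ (2 + 1)); [apply abs_le_of_exp_gap_le | lra].
    pose proof (lyapunov_ge_gap K c gm (z t) (u t) (w t) (Rlt_le _ _ Hgm)).
    assert (eta <= 2 * K * c) by apply Rmin_l.
    nra. }
  apply norm3_lt_iff; [exact Heps |].
  pose proof (sqr_norm_le_lyapunov K c gm 3 (z t) (u t) (w t) K_pos c_pos Hgm Hz) as Hnorm.
  fold P in Hnorm; nra.
Qed.

Lemma solution_bounded (gm eps : R) (z u w : R -> R) :
  strict_weight gm eps -> is_solution z0 A a B b z u w ->
  forall t, 0 <= t -> Rabs (z t) <= 2 + lyapunov K c gm 0 (z 0) (u 0) (w 0) / (2 * K * c).
Proof.
  intros Hw Hs t Ht; apply abs_le_of_exp_gap_le.
  pose proof (lyapunov_ge_gap K c gm (z t) (u t) (w t) (Rlt_le _ _ (proj1 Hw))).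
  pose proof (lyapunov_nonincreasing gm eps z u w Hw Hs t Ht).
  pose proof K_pos; pose proof c_pos.
  assert (0 < 2 * K * c) by nra.
  apply (Rmult_le_reg_l (2 * K * c)); [lra |].
  replace (2 * K * c * (lyapunov K c gm 0 (z 0) (u 0) (w 0) / (2 * K * c)))
    with (lyapunov K c gm 0 (z 0) (u 0) (w 0)) by (field; repeat split; lra).
  lra.
Qed.

Lemma strict_lyapunov_exp_decay (gm eps r dl : R) (z u w : R -> R) :
  strict_weight gm eps -> is_solution z0 A a B b z u w ->
  (forall t, 0 <= t -> Rabs (z t) <= r) ->
  0 < dl <= 1 / 2 -> dl * (K * (exp r / c) + 1) <= eps -> dl * (1 + q ^ 2) <= eps ->
  exists lm, 0 < lm /\ forall t, 0 <= t ->
    lyapunov K c gm dl (z t) (u t) (w t) * exp (lm * t) <= lyapunov K c gm dl (z 0) (u 0) (w 0).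
Proof.
  intros [Hgm [Heps Hform]] Hs Hz Hdl HdlM Hdlq.
  assert (Hdl' : 0 <= dl <= 1 / 2) by lra.
  set (M := exp r / c) in *.
  assert (HM : 0 < M) by (apply Rdiv_lt_0_compat; [apply exp_pos | exact c_pos]).
  set (C := 2 * K * M + M ^ 2 + 2 + gm).
  assert (HC : 0 < C) by (pose proof K_pos; pose proof (pow2_ge_0 M); unfold C; nra).
  exists (dl / (2 * C)); split; [apply Rdiv_lt_0_compat; lra |].
  apply (exp_decay_of_derive_le _ _ _ (fun t Ht => lyapunov_derive_solution gm dl z u w t Hs Ht));
    [| exact (solution_lim_lyapunov gm dl z u w Hs)].
  intros t Ht.
  pose proof (strict_lyapunov_le_sqr K c gm dl r (z t) (u t) (w t) K_pos c_pos Hgm Hdl'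
                (Hz t (Rlt_le _ _ Ht))) as HW.
  pose proof (perturbed_dissipation_le K M q eps dl _ (g (z t)) (z t) (u t) (w t) K_pos
                (proj1 Hdl') HdlM Hdlq (Hform (g (z t)) (w t))
                (mul_scaled_expm1_le_of_abs_le _ _ _ c_pos (Hz t (Rlt_le _ _ Ht)))) as HdW.
  assert (dl / (2 * C) * lyapunov K c gm dl (z t) (u t) (w t)
            <= dl / 2 * (g (z t) ^ 2 + u t ^ 2 + w t ^ 2)).
  { replace (dl / 2 * (g (z t) ^ 2 + u t ^ 2 + w t ^ 2))
      with (dl / (2 * C) * (C * (g (z t) ^ 2 + u t ^ 2 + w t ^ 2))) by (field; lra).
    apply Rmult_le_compat_l; [apply Rlt_le, Rdiv_lt_0_compat; lra | exact HW]. }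
  lra.
Qed.

Lemma solution_sqr_exp_decay (z u w : R -> R) :
  is_solution z0 A a B b z u w ->
  exists lm P, 0 < lm /\
    forall t, 0 <= t -> (z t ^ 2 + u t ^ 2 + w t ^ 2) * exp (lm * t) <= P.
Proof.
  intros Hs.
  destruct exists_strict_weight as [gm [eps Hw]]; pose proof Hw as [Hgm [Heps _]].
  pose proof K_pos; pose proof c_pos.
  set (r := 2 + lyapunov K c gm 0 (z 0) (u 0) (w 0) / (2 * K * c)).
  pose proof (solution_bounded gm eps z u w Hw Hs) as Hz; fold r in Hz.
  assert (HKM : 0 < K * (exp r / c) + 1)
    by (assert (0 < exp r / c) by (apply Rdiv_lt_0_compat; [apply exp_pos | lra]); nra).
  assert (Hq : 0 < 1 + q ^ 2) by (pose proof (pow2_ge_0 q); lra).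
  assert (Hr : 0 < 4 + r ^ 2) by (pose proof (pow2_ge_0 r); lra).
  assert (HKc : 0 < K * c) by nra.
  destruct (exists_small_pos _ _ _ _ _ _ HKM Heps Hq Heps Hr HKc) as [dl [Hdl [HdlM [Hdlq Hdlr]]]].
  assert (Hdl' : 0 <= dl <= 1 / 2) by lra.
  destruct (strict_lyapunov_exp_decay gm eps r dl z u w Hw Hs Hz Hdl HdlM Hdlq)
    as [lm [Hlm Hdecay]].
  set (W0 := lyapunov K c gm dl (z 0) (u 0) (w 0)).
  set (Pn := (4 + r ^ 2) / (2 * K * c) + 1 + 1 / gm).
  assert (HPn : 0 <= Pn).
  { assert (0 <= (4 + r ^ 2) / (2 * K * c))
      by (apply Rdiv_le_0_compat; [pose proof (pow2_ge_0 r) | ]; nra).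
    assert (0 < 1 / gm) by (apply Rdiv_lt_0_compat; lra).
    unfold Pn; lra. }
  exists lm, (Pn * (2 * W0)); split; [exact Hlm |]; intros t Ht.
  pose proof (sqr_norm_le_lyapunov K c gm r (z t) (u t) (w t) K_pos c_pos Hgm (Hz t Ht)) as Hnorm.
  pose proof (lyapunov_le_2_strict K c gm dl r (z t) (u t) (w t) K_pos c_pos Hgm Hdl' Hdlr
                (Hz t Ht)) as HVW.
  pose proof (Hdecay t Ht) as HW; fold W0 in HW; fold Pn in Hnorm.
  pose proof (exp_pos (lm * t)).
  apply (Rle_trans _ (Pn * (2 * lyapunov K c gm dl (z t) (u t) (w t)) * exp (lm * t))).
  - apply Rmult_le_compat_r; [lra |].
    apply (Rle_trans _ _ _ Hnorm), Rmult_le_compat_l; assumption.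
  - rewrite !Rmult_assoc; apply Rmult_le_compat_l; [exact HPn | lra].
Qed.

Lemma shifted_system_attractive (z u w : R -> R) :
  is_solution z0 A a B b z u w ->
  is_lim z p_infty 0 /\ is_lim u p_infty 0 /\ is_lim w p_infty 0.
Proof.
  intros Hs; destruct (solution_sqr_exp_decay z u w Hs) as [lm [P [Hlm Hdecay]]].
  assert (Hcomp : forall x : R -> R,
             (forall t, x t ^ 2 <= z t ^ 2 + u t ^ 2 + w t ^ 2) -> is_lim x p_infty 0).
  { intros x Hx; apply (is_lim_0_of_sqr_exp_bound x P lm Hlm); intros t Ht.
    apply (Rle_trans _ _ _ (Rmult_le_compat_r _ _ _ (Rlt_le _ _ (exp_pos _)) (Hx t))).
    exact (Hdecay t Ht). }
  repeat split; apply Hcomp; intros t;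
    pose proof (pow2_ge_0 (z t)); pose proof (pow2_ge_0 (u t)); pose proof (pow2_ge_0 (w t)); lra.
Qed.

End ShiftedSystem.

Lemma model_constants_pos (b1 b2 n1 n2 : R) :
  0 < b1 -> 0 < b2 -> 0 < n1 < 1 -> 0 < n2 < 1 ->
  0 < cB b1 b2 n1 n2 /\
  0 < cA b1 b2 n1 n2 + cb b1 b2 n1 n2 * ca b1 b2 n1 n2 / cB b1 b2 n1 n2.
Proof.
  intros Hb1 Hb2 Hn1 Hn2; unfold cA, ca, cB, cb.
  assert (HB : 0 < b1 * n1 + b2 * n2) by nra.
  split; [exact HB |].
  (* [A B + b a = 2 (b1 (1 - n1) b2 n2 + b2 (1 - n2) b1 n1)] *)
  replace (b1 * (1 - n1) + b2 * (1 - n2)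
           + (- b1 * n1 + b2 * n2) * (b1 * (1 - n1) - b2 * (1 - n2)) / (b1 * n1 + b2 * n2))
    with (2 * (b1 * b2 * ((1 - n1) * n2 + (1 - n2) * n1)) / (b1 * n1 + b2 * n2)) by (field; lra).
  apply Rdiv_lt_0_compat; [| exact HB].
  assert (0 < b1 * b2) by nra; assert (0 < (1 - n1) * n2 + (1 - n2) * n1) by nra; nra.
Qed.

Theorem theorem6p2 (b1 b2 n1 n2 r1 r2 : R)
  (hb1 : 0 < b1) (hb2 : 0 < b2)
  (hn1 : 0 < n1 < 1) (hn2 : 0 < n2 < 1)
  (hr1 : 0 < r1 < 1) (hr2 : 0 < r2 < 1) :
  let A := cA b1 b2 n1 n2 in
  let a := ca b1 b2 n1 n2 in
  let B := cB b1 b2 n1 n2 in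
  let b := cb b1 b2 n1 n2 in
  let D := cD b1 b2 n1 n2 r1 r2 in
  let d := cd b1 b2 n1 n2 r1 r2 in
  0 < 1 - (D * B - b * d) / (A * B + b * a) ->
  let z0 := ln (1 - (D * B - b * d) / (A * B + b * a)) in
  B ^ 2 > a * b ->
  (* Lyapunov stability of the origin *)
  (forall eps, 0 < eps -> exists delta, 0 < delta /\
     forall z u w : R -> R, is_solution z0 A a B b z u w ->
       norm3 (z 0) (u 0) (w 0) < delta ->
       forall t, 0 <= t -> norm3 (z t) (u t) (w t) < eps) /\
  (* global attractivity: every solution tends to (0,0,0) *)
  (forall z u w : R -> R, is_solution z0 A a B b z u w ->
     is_lim z p_infty 0 /\ is_lim u p_infty 0 /\ is_lim w p_infty 0).
Proof.
  (* The rho's and the positivity of the logarithm's argument only make z0 the equilibrium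
     level of the original model; the shifted system is stable for every z0. *)
  intros A a B b D d _ z0 Hab.
  destruct (model_constants_pos b1 b2 n1 n2 hb1 hb2 hn1 hn2) as [HB HK].
  split.
  - exact (shifted_system_stable z0 A a B b HB HK Hab).
  - exact (shifted_system_attractive z0 A a B b HB HK Hab).
Qed.
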